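(* Let $\mathcal{P}_{16}=\{(a:b:1)\in\mathbb{P}^2(\mathbb{C}) : a,b\in\{1,-1,i,-i\}\}$ and $\mathcal{P}_{12}=\{(0:a:1),(a:0:1),(a:1:0) : a\in\mathbb{C},\ a^4=-1\}$, and let $\mathcal{P}_{28}=\mathcal{P}_{16}\cup\mathcal{P}_{12}$. Then the set of smooth conics in $\mathbb{P}^2(\mathbb{C})$ containing at least $6$ points of $\mathcal{P}_{28}$ has exactly $2736$ elements; among them exactly $2616$ contain exactly $6$ points of $\mathcal{P}_{28}$, exactly $96$ contain exactly $7$ points, and exactly $24$ contain exactly $8$ points (and none contains more than $8$). Moreover, each point of $\mathcal{P}_{16}$ lies on exactly $546$ of these conics and each point of $\mathcal{P}_{12}$ lies on exactly $652$ of them.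
   Context: $\mathcal{P}_{28}$ is the singular set of the curve $\check C$ dual to the Fermat quartic $x^4+y^4+z^4=0$, namely $\check C: x^{12}+3x^8y^4+3x^4y^8+y^{12}+3x^8z^4-21x^4y^4z^4+3y^8z^4+3x^4z^8+3y^4z^8+z^{12}=0$; $\mathcal{P}_{16}$ is the set of its nodes and $\mathcal{P}_{12}$ the set of its $E_6$ singularities. A ''conic'' means a smooth (irreducible) plane curve of degree $2$. *)

(* complex numbers = algC (algebraic closure of Q in C). *)
From HB Require Import structures.
From mathcomp Require Import all_boot all_order all_algebra all_field.
Set Implicit Arguments. Unset Strict Implicit. Unset Printing Implicit Defensive.
Import Order.TTheory GRing.Theory Num.Theory.
Local Open Scope ring_scope.

(* Points of P^2(C) are represented by nonzero row vectors (x:y:z). *)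
Definition pt (a b c : algC) : 'rV[algC]_3 := \row_(j < 3) [:: a; b; c]`_j.

Definition U4 : seq algC := [:: 1; -1; 'i; - 'i].

(* the four complex roots of a^4 = -1 : w*u, u in U4, where w = 4.-root(-1)
   satisfies w^4 = -1 *)
Definition R4 : seq algC := [seq (4.-root (-1)) * u | u <- U4].

Definition P16 : seq 'rV[algC]_3 := [seq pt a b 1 | a <- U4, b <- U4].
Definition P12 : seq 'rV[algC]_3 :=
  [seq pt 0 a 1 | a <- R4] ++ [seq pt a 0 1 | a <- R4] ++ [seq pt a 1 0 | a <- R4].
Definition P28 : seq 'rV[algC]_3 := P16 ++ P12.

(* A plane conic is given by a nonzero symmetric 3x3 matrix A (the quadratic
   form p A p^T), up to a nonzero scalar; it is smooth iff det A <> 0. *)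
Definition smooth_conic (A : 'M[algC]_3) : Prop := A^T = A /\ \det A != 0.
Definition same_conic (A B : 'M[algC]_3) : Prop := exists2 c : algC, c != 0 & B = c *: A.
Definition on_conic (A : 'M[algC]_3) (p : 'rV[algC]_3) : bool := p *m A *m p^T == 0.

(* number of points of P28 on the conic A (the listed representatives are
   pairwise distinct projective points) *)
Definition npts (A : 'M[algC]_3) : nat := count (on_conic A) P28.

(* No three distinct points of a smooth conic are collinear, and the conics through
   four points in general position form the pencil spanned by the two line pairs
   p1p2.p3p4 and p1p4.p2p3; its member through a fifth point is given by an explicit
   formula ([conic5]).  So a smooth conic through at least six of the 28 points is
   [conic5] of its first five points, taken in a fixed order of the 28 points.  These
   points have coordinates in Z[zeta_8], where arithmetic is exact: enumerating the
   candidate conics over all four-point subsets and counting incidences is a finite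
   computation, done by [vm_compute].  The embedding of Z[zeta_8] into algC is
   injective, since zeta_8 has degree 4, and transfers the counts to the statement. *)

From HB Require Import structures.
From Stdlib Require Import ZArith.
From mathcomp Require Import all_boot all_order all_algebra all_field.
From mathcomp Require Import ssrZ ring.
Set Implicit Arguments. Unset Strict Implicit. Unset Printing Implicit Defensive.
Import Order.TTheory GRing.Theory Num.Theory.
Local Open Scope ring_scope.

(** * Vectors and ternary quadratic forms *)

Record vec3 (R : Type) := Vec3 { vx : R; vy : R; vz : R }.
Record quad (R : Type) := Quad { q00 : R; q11 : R; q22 : R; q01 : R; q02 : R; q12 : R }.
Arguments Vec3 {R}.
Arguments Quad {R}.

Definition vec3_tuple R (p : vec3 R) := (vx p, vy p, vz p).
Definition tuple_vec3 R (t : R * R * R) := let: (x, y, z) := t in Vec3 x y z.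
Lemma vec3_tupleK R : cancel (@vec3_tuple R) (@tuple_vec3 R). Proof. by case. Qed.
HB.instance Definition _ (R : eqType) := Equality.copy (vec3 R) (can_type (@vec3_tupleK R)).

Definition quad_tuple R (a : quad R) := (q00 a, q11 a, q22 a, q01 a, q02 a, q12 a).
Definition tuple_quad R (t : R * R * R * R * R * R) :=
  let: (a00, a11, a22, a01, a02, a12) := t in Quad a00 a11 a22 a01 a02 a12.
Lemma quad_tupleK R : cancel (@quad_tuple R) (@tuple_quad R). Proof. by case. Qed.
HB.instance Definition _ (R : eqType) := Equality.copy (quad R) (can_type (@quad_tupleK R)).

Section VectorOps.
Variable R : comNzRingType.
Implicit Types (p q l : vec3 R) (t : R).

Definition vec0 : vec3 R := Vec3 0 0 0.
Definition ex : vec3 R := Vec3 1 0 0.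
Definition ey : vec3 R := Vec3 0 1 0.
Definition ez : vec3 R := Vec3 0 0 1.
Definition vadd p q := Vec3 (vx p + vx q) (vy p + vy q) (vz p + vz q).
Definition vscale t p := Vec3 (t * vx p) (t * vy p) (t * vz p).
Definition dot l p := vx l * vx p + vy l * vy p + vz l * vz p.
Definition cross p q :=
  Vec3 (vy p * vz q - vz p * vy q) (vz p * vx q - vx p * vz q) (vx p * vy q - vy p * vx q).

End VectorOps.
Arguments vec0 {R}.
Arguments ex {R}.
Arguments ey {R}.
Arguments ez {R}.

Notation det3 p q r := (dot (cross p q) r).

Section Forms.
Variable R : comNzRingType.
Implicit Types (p q r x y l m : vec3 R) (a : quad R) (al be t : R).

(* [Quad a00 a11 a22 a01 a02 a12] is the symmetric matrix (a_ij), i.e. the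
   quadratic form a00 x^2 + a11 y^2 + a22 z^2 + 2 (a01 x y + a02 x z + a12 y z). *)
Definition quad0 : quad R := Quad 0 0 0 0 0 0.
Definition qf a p :=
  q00 a * vx p ^+ 2 + q11 a * vy p ^+ 2 + q22 a * vz p ^+ 2
  + (q01 a * (vx p * vy p) + q02 a * (vx p * vz p) + q12 a * (vy p * vz p)) *+ 2.
Definition bf a p q :=
  q00 a * (vx p * vx q) + q11 a * (vy p * vy q) + q22 a * (vz p * vz q)
  + q01 a * (vx p * vy q + vy p * vx q) + q02 a * (vx p * vz q + vz p * vx q)
  + q12 a * (vy p * vz q + vz p * vy q).
Definition qdet a :=
  q00 a * q11 a * q22 a + (q01 a * q02 a * q12 a) *+ 2
  - q00 a * q12 a ^+ 2 - q11 a * q02 a ^+ 2 - q22 a * q01 a ^+ 2.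
Definition qcomb al be a b :=
  Quad (al * q00 a + be * q00 b) (al * q11 a + be * q11 b) (al * q22 a + be * q22 b)
       (al * q01 a + be * q01 b) (al * q02 a + be * q02 b) (al * q12 a + be * q12 b).
Definition qscale t a :=
  Quad (t * q00 a) (t * q11 a) (t * q22 a) (t * q01 a) (t * q02 a) (t * q12 a).
Definition gram a p q r :=
  Quad (bf a p p) (bf a q q) (bf a r r) (bf a p q) (bf a p r) (bf a q r).
Definition line_pair l m :=
  Quad ((vx l * vx m) *+ 2) ((vy l * vy m) *+ 2) ((vz l * vz m) *+ 2)
       (vx l * vy m + vy l * vx m) (vx l * vz m + vz l * vx m) (vy l * vz m + vz l * vy m).
Definition pair_val l m p := dot l p * dot m p.

Definition general4 p1 p2 p3 p4 :=
  [&& det3 p1 p2 p3 != 0, det3 p1 p2 p4 != 0, det3 p1 p3 p4 != 0 & det3 p2 p3 p4 != 0].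
(* For p1, ..., p4 in general position the line pairs p1p2.p3p4 and p1p4.p2p3 span the
   pencil of conics through them ([pencil_through4]); [conic5] is its member through p5. *)
Definition pencilU p1 p2 p3 p4 := line_pair (cross p1 p2) (cross p3 p4).
Definition pencilV p1 p2 p3 p4 := line_pair (cross p1 p4) (cross p2 p3).
Definition conic5 p1 p2 p3 p4 p5 :=
  qcomb (pair_val (cross p1 p4) (cross p2 p3) p5) (- pair_val (cross p1 p2) (cross p3 p4) p5)
        (pencilU p1 p2 p3 p4) (pencilV p1 p2 p3 p4).

Lemma bfC a p q : bf a p q = bf a q p.
Proof. rewrite /bf; ring. Qed.

Lemma bf_diag a p : bf a p p = qf a p.
Proof. rewrite /bf /qf; ring. Qed.

Lemma bfDr a p q r : bf a r (vadd p q) = bf a r p + bf a r q.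
Proof. rewrite /bf /=; ring. Qed.

Lemma bfZr a t p q : bf a q (vscale t p) = t * bf a q p.
Proof. rewrite /bf /=; ring. Qed.

Lemma bfDl a p q r : bf a (vadd p q) r = bf a p r + bf a q r.
Proof. by rewrite bfC bfDr !(bfC a r). Qed.

Lemma bfZl a t p q : bf a (vscale t p) q = t * bf a p q.
Proof. by rewrite bfC bfZr bfC. Qed.

Lemma qf_vscale a t p : qf a (vscale t p) = t ^+ 2 * qf a p.
Proof. by rewrite -!bf_diag bfZl bfZr mulrA -expr2. Qed.

Lemma qf_vadd a p q : qf a (vadd p q) = qf a p + bf a p q *+ 2 + qf a q.
Proof. by rewrite -!bf_diag !(bfDl, bfDr) (bfC a q p); ring. Qed.

Lemma det3_cycle p q r : det3 p q r = det3 q r p.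
Proof. rewrite /dot /=; ring. Qed.

Lemma det3_swap p q r : det3 p q r = - det3 q p r.
Proof. rewrite /dot /=; ring. Qed.

Lemma det3_swap23 p q r : det3 p q r = - det3 p r q.
Proof. rewrite /dot /=; ring. Qed.

Lemma det3_same13 p q : det3 p q p = 0.
Proof. rewrite /dot /=; ring. Qed.

Lemma det3_same23 p q : det3 p q q = 0.
Proof. rewrite /dot /=; ring. Qed.

Lemma cramer3 p1 p2 p3 x :
  vscale (det3 p1 p2 p3) x =
  vadd (vadd (vscale (det3 p2 p3 x) p1) (vscale (det3 p3 p1 x) p2)) (vscale (det3 p1 p2 x) p3).
Proof. rewrite /vscale /vadd /dot /=; congr Vec3; ring. Qed.

Lemma cross_lines_meet p q r x :
  vscale (det3 p q r) (cross p x) =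
  vadd (vscale (det3 p x r) (cross p q)) (vscale (det3 p q x) (cross p r)).
Proof. rewrite /vscale /vadd /dot /=; congr Vec3; ring. Qed.

Lemma quad_bf a :
  a = Quad (bf a ex ex) (bf a ey ey) (bf a ez ez) (bf a ex ey) (bf a ex ez) (bf a ey ez).
Proof. case: a => *; rewrite /bf /=; congr Quad; ring. Qed.

Lemma qdet_gram a p q r : qdet (gram a p q r) = det3 p q r ^+ 2 * qdet a.
Proof. rewrite /qdet /gram /bf /dot /=; ring. Qed.

Lemma qf_line_pair l m p : qf (line_pair l m) p = pair_val l m p *+ 2.
Proof. rewrite /qf /pair_val /dot /=; ring. Qed.

Lemma bf_line_pair l m p q : bf (line_pair l m) p q = dot l p * dot m q + dot l q * dot m p.
Proof. rewrite /bf /dot /=; ring. Qed.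

Lemma qf_qcomb al be a b p : qf (qcomb al be a b) p = al * qf a p + be * qf b p.
Proof. rewrite /qf /=; ring. Qed.

Lemma bf_qcomb al be a b p q : bf (qcomb al be a b) p q = al * bf a p q + be * bf b p q.
Proof. rewrite /bf /=; ring. Qed.

Lemma qf_qscale t a p : qf (qscale t a) p = t * qf a p.
Proof. rewrite /qf /=; ring. Qed.

Lemma qdet_qscale t a : qdet (qscale t a) = t ^+ 3 * qdet a.
Proof. rewrite /qdet /=; ring. Qed.

Lemma qcomb_scale t al be a b : qcomb (t * al) (t * be) a b = qscale t (qcomb al be a b).
Proof. rewrite /qcomb /qscale /=; congr Quad; ring. Qed.

Lemma qcomb_subr_eq0 a b : qcomb 1 (-1) a b = quad0 -> a = b.
Proof.
case: a b => ? ? ? ? ? ? [? ? ? ? ? ?] [] /=.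
by rewrite !mul1r !mulN1r; do 6 move/subr0_eq->.
Qed.

Lemma qf_qcomb_subr a b p : qf (qcomb 1 (-1) a b) p = qf a p - qf b p.
Proof. by rewrite qf_qcomb mul1r mulN1r. Qed.

Lemma bf_qcomb_subr a b p q : bf (qcomb 1 (-1) a b) p q = bf a p q - bf b p q.
Proof. by rewrite bf_qcomb mul1r mulN1r. Qed.

Lemma dot_ex l : dot l ex = vx l. Proof. by rewrite /dot /= mulr1 !mulr0 !addr0. Qed.
Lemma dot_ey l : dot l ey = vy l. Proof. by rewrite /dot /= mulr1 !mulr0 add0r addr0. Qed.
Lemma dot_ez l : dot l ez = vz l. Proof. by rewrite /dot /= mulr1 !mulr0 !add0r. Qed.

Lemma qf_conic5 p1 p2 p3 p4 p5 p : qf (conic5 p1 p2 p3 p4 p5) p =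
  (pair_val (cross p1 p4) (cross p2 p3) p5 * pair_val (cross p1 p2) (cross p3 p4) p
   - pair_val (cross p1 p2) (cross p3 p4) p5 * pair_val (cross p1 p4) (cross p2 p3) p) *+ 2.
Proof. by rewrite qf_qcomb !qf_line_pair !mulrnAr mulNr -mulrnDl. Qed.

End Forms.
Arguments quad0 {R}.

Section MapForms.
Variables (R S : comNzRingType) (f : {rmorphism R -> S}).

Definition map_vec3 (p : vec3 R) : vec3 S := Vec3 (f (vx p)) (f (vy p)) (f (vz p)).
Definition map_quad (a : quad R) : quad S :=
  Quad (f (q00 a)) (f (q11 a)) (f (q22 a)) (f (q01 a)) (f (q02 a)) (f (q12 a)).

Lemma map_cross p q : map_vec3 (cross p q) = cross (map_vec3 p) (map_vec3 q).
Proof. by rewrite /cross /map_vec3 /= !(rmorphB, rmorphM). Qed.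

Lemma dot_map l p : dot (map_vec3 l) (map_vec3 p) = f (dot l p).
Proof. by rewrite /dot /= !(rmorphD, rmorphM). Qed.

Lemma det3_map p q r : det3 (map_vec3 p) (map_vec3 q) (map_vec3 r) = f (det3 p q r).
Proof. by rewrite -map_cross dot_map. Qed.

Lemma qf_map a p : qf (map_quad a) (map_vec3 p) = f (qf a p).
Proof. by rewrite /qf /= !(rmorphD, rmorphM, rmorphMn, rmorphXn). Qed.

Lemma qdet_map a : qdet (map_quad a) = f (qdet a).
Proof. by rewrite /qdet /= !(rmorphB, rmorphD, rmorphM, rmorphMn, rmorphXn). Qed.

Lemma map_qcomb al be a b :
  map_quad (qcomb al be a b) = qcomb (f al) (f be) (map_quad a) (map_quad b).
Proof. by rewrite /qcomb /map_quad /= !(rmorphD, rmorphM). Qed.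

Lemma map_line_pair l m : map_quad (line_pair l m) = line_pair (map_vec3 l) (map_vec3 m).
Proof. by rewrite /line_pair /map_quad /= !(rmorphD, rmorphM, rmorphMn). Qed.

Lemma map_conic5 p1 p2 p3 p4 p5 :
  map_quad (conic5 p1 p2 p3 p4 p5) =
  conic5 (map_vec3 p1) (map_vec3 p2) (map_vec3 p3) (map_vec3 p4) (map_vec3 p5).
Proof.
by rewrite /conic5 /pencilU /pencilV /pair_val map_qcomb !map_line_pair rmorphN
  !rmorphM -!dot_map !map_cross.
Qed.

End MapForms.

(** * Conics through four and five points *)

Section Conics.
Variable F : fieldType.
Hypothesis two_neq0 : 2%:R != 0 :> F.
Implicit Types (p q r x e : vec3 F) (a : quad F).

Lemma mulrn2_eq0 (z : F) : (z *+ 2 == 0) = (z == 0).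
Proof. by rewrite -mulr_natr mulf_eq0 (negbTE two_neq0) orbF. Qed.

Lemma vscale_eq0 t x : t != 0 -> vscale t x = vec0 -> x = vec0.
Proof.
move=> t0; case: x => x y z [] /eqP + /eqP + /eqP.
by rewrite !mulf_eq0 (negbTE t0) /= => /eqP-> /eqP-> /eqP->.
Qed.

Lemma lines_meet p q r x :
  det3 p q r != 0 -> det3 p q x = 0 -> det3 p r x = 0 -> cross p x = vec0.
Proof.
move=> dpqr dpqx dprx; apply: (vscale_eq0 dpqr).
by rewrite cross_lines_meet dpqx det3_swap23 dprx oppr0 /vadd /vscale /= !mul0r !addr0.
Qed.

Lemma cross_neq0_basis p q : cross p q != vec0 -> exists e, det3 p q e != 0.
Proof.
move=> npq; have [x0|] := eqVneq (det3 p q ex) 0; last by exists ex.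
have [y0|] := eqVneq (det3 p q ey) 0; last by exists ey.
exists ez; apply: contra npq => /eqP.
by move: x0 y0; rewrite dot_ex dot_ey dot_ez; case: (cross p q) => /= ? ? ? -> -> ->.
Qed.

Lemma quad_eq0_basis a p1 p2 p3 : det3 p1 p2 p3 != 0 ->
  qf a p1 = 0 -> qf a p2 = 0 -> qf a p3 = 0 ->
  bf a p1 p2 = 0 -> bf a p1 p3 = 0 -> bf a p2 p3 = 0 -> a = quad0.
Proof.
move=> D0 h1 h2 h3 h12 h13 h23.
have bf0 x y : bf a x y = 0.
  have: bf a (vscale (det3 p1 p2 p3) x) (vscale (det3 p1 p2 p3) y) = 0.
    rewrite (cramer3 p1 p2 p3 x) (cramer3 p1 p2 p3 y) !(bfDl, bfDr, bfZl, bfZr) !bf_diag.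
    by rewrite !(bfC a p2 p1, bfC a p3 p1, bfC a p3 p2) h1 h2 h3 h12 h13 h23 !mulr0 !addr0.
  by rewrite bfZl bfZr => /eqP; rewrite !mulf_eq0 (negbTE D0) /= => /eqP.
by rewrite (quad_bf a) !bf0.
Qed.

Lemma quad_through4_eq0 a p1 p2 p3 p4 : general4 p1 p2 p3 p4 ->
  qf a p1 = 0 -> qf a p2 = 0 -> qf a p3 = 0 -> qf a p4 = 0 ->
  bf a p1 p2 = 0 -> bf a p1 p4 = 0 -> a = quad0.
Proof.
case/and4P=> D0 d124 d134 _ h1 h2 h3 h4 h12 h14.
(* Pairing Cramer's expansion of p4 in the basis (p1, p2, p3) with p1, and then with
   itself, gives bf a p1 p3 = 0 and bf a p2 p3 = 0. *)
have dec := cramer3 p1 p2 p3 p4.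
have h13 : bf a p1 p3 = 0.
  have: bf a p1 (vscale (det3 p1 p2 p3) p4) = 0 by rewrite bfZr h14 mulr0.
  rewrite dec !bfDr !bfZr bf_diag h1 h12 !mulr0 !add0r => /eqP.
  by rewrite mulf_eq0 (negbTE d124) => /eqP.
have h23 : bf a p2 p3 = 0.
  have: qf a (vscale (det3 p1 p2 p3) p4) = 0 by rewrite qf_vscale h4 mulr0.
  rewrite dec !qf_vadd !qf_vscale !(bfDl, bfZl, bfZr) h1 h2 h3 h12 h13.
  rewrite !mulr0 mul0rn !addr0 !add0r => /eqP.
  rewrite mulrn2_eq0 !mulf_eq0 (negbTE d124) det3_cycle det3_swap23 oppr_eq0.
  by rewrite (negbTE d134) => /eqP.
exact: (quad_eq0_basis D0 h1 h2 h3 h12 h13 h23).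
Qed.

Lemma pencil_through4 a p1 p2 p3 p4 : general4 p1 p2 p3 p4 ->
  qf a p1 = 0 -> qf a p2 = 0 -> qf a p3 = 0 -> qf a p4 = 0 ->
  exists al be, a = qcomb al be (pencilU p1 p2 p3 p4) (pencilV p1 p2 p3 p4).
Proof.
move=> g h1 h2 h3 h4; have /and4P[d123 d124 d134 _] := g.
set U := pencilU p1 p2 p3 p4; set V := pencilV p1 p2 p3 p4.
have U0 p : p \in [:: p1; p2; p3; p4] -> qf U p = 0.
  by rewrite !inE qf_line_pair /pair_val => /or4P[] /eqP->;
    rewrite ?det3_same13 ?det3_same23 ?mul0r ?mulr0 mul0rn.
have V0 p : p \in [:: p1; p2; p3; p4] -> qf V p = 0.
  by rewrite !inE qf_line_pair /pair_val => /or4P[] /eqP->;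
    rewrite ?det3_same13 ?det3_same23 ?mul0r ?mulr0 mul0rn.
have U12 : bf U p1 p2 = 0 by rewrite bf_line_pair det3_same13 det3_same23 !mul0r addr0.
have V14 : bf V p1 p4 = 0 by rewrite bf_line_pair det3_same13 det3_same23 !mul0r addr0.
have U14 : bf U p1 p4 != 0.
  by rewrite bf_line_pair det3_same13 mul0r add0r -(det3_cycle p1) mulf_neq0.
have V12 : bf V p1 p2 != 0.
  by rewrite bf_line_pair det3_same13 mul0r add0r det3_swap23 -(det3_cycle p1) mulf_neq0 ?oppr_eq0.
exists (bf a p1 p4 / bf U p1 p4), (bf a p1 p2 / bf V p1 p2).
apply: qcomb_subr_eq0; apply: (quad_through4_eq0 g);
  rewrite ?qf_qcomb_subr ?bf_qcomb_subr ?qf_qcomb ?bf_qcomb.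
- by rewrite h1 U0 ?V0 ?inE ?eqxx // !mulr0 addr0 subrr.
- by rewrite h2 U0 ?V0 ?inE ?eqxx ?orbT // !mulr0 addr0 subrr.
- by rewrite h3 U0 ?V0 ?inE ?eqxx ?orbT // !mulr0 addr0 subrr.
- by rewrite h4 U0 ?V0 ?inE ?eqxx ?orbT // !mulr0 addr0 subrr.
- by rewrite U12 mulr0 add0r divfK // subrr.
- by rewrite V14 mulr0 addr0 divfK // subrr.
Qed.

Lemma pencil_base_points p1 p2 p3 p4 x : general4 p1 p2 p3 p4 ->
  pair_val (cross p1 p2) (cross p3 p4) x = 0 -> pair_val (cross p1 p4) (cross p2 p3) x = 0 ->
  has (fun p => cross p x == vec0) [:: p1; p2; p3; p4].
Proof.
case/and4P=> d123 d124 d134 d234; rewrite /pair_val /=.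
move=> /eqP; rewrite mulf_eq0 => /orP[] /eqP h1 /eqP; rewrite mulf_eq0 => /orP[] /eqP h2.
- by rewrite (lines_meet d124 h1 h2) eqxx.
- rewrite (@lines_meet p2 p1 p3) ?eqxx ?orbT //; first by rewrite det3_swap oppr_eq0.
  by rewrite det3_swap h1 oppr0.
- rewrite (@lines_meet p4 p3 p1) ?eqxx ?orbT //.
  + by rewrite det3_swap oppr_eq0 -det3_cycle.
  + by rewrite det3_swap h1 oppr0.
  + by rewrite det3_swap h2 oppr0.
- rewrite (@lines_meet p3 p4 p2) ?eqxx ?orbT //; first by rewrite -det3_cycle.
  by rewrite det3_swap h2 oppr0.
Qed.

Lemma smooth_conic_noncollinear a p q r : qdet a != 0 ->
  cross p q != vec0 -> cross q r != vec0 -> cross p r != vec0 ->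
  qf a p = 0 -> qf a q = 0 -> qf a r = 0 -> det3 p q r != 0.
Proof.
move=> ha npq nqr npr hp hq hr; apply/eqP => dpqr.
have [e dpqe] := cross_neq0_basis npq.
have al0 : det3 q e r != 0.
  apply: contra nqr => /eqP dqer; apply/eqP; apply: (@lines_meet q p e) => //.
    by rewrite det3_swap oppr_eq0.
  by rewrite det3_swap dpqr oppr0.
have be0 : det3 e p r != 0.
  apply: contra npr => /eqP depr; apply/eqP; apply: (@lines_meet p q e) => //.
  by rewrite det3_swap depr oppr0.
(* as det3 p q r = 0, Cramer's rule in the basis (p, q, e) expresses r through p and q *)
have rpq : vscale (det3 p q e) r = vadd (vscale (det3 q e r) p) (vscale (det3 e p r) q).
  by rewrite cramer3 dpqr /vadd /vscale /= !mul0r !addr0.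
have bpq : bf a p q = 0.
  have := congr1 (qf a) rpq; rewrite qf_vscale hr mulr0 qf_vadd !qf_vscale hp hq bfZl bfZr.
  rewrite !mulr0 add0r addr0 => /esym/eqP.
  by rewrite mulrn2_eq0 !mulf_eq0 (negbTE al0) (negbTE be0) => /eqP.
have := qdet_gram a p q e.
rewrite /gram !bf_diag hp hq bpq {1}/qdet /=.
rewrite !(mul0r, mulr0, mul0rn, subr0, add0r, addr0, expr0n, oppr0).
by move/esym/eqP; rewrite mulf_eq0 expf_eq0 (negbTE dpqe) (negbTE ha) andbF.
Qed.

Lemma smooth_conic_general4 a p1 p2 p3 p4 : qdet a != 0 ->
  pairwise (fun p q => cross p q != vec0) [:: p1; p2; p3; p4] ->
  all (fun p => qf a p == 0) [:: p1; p2; p3; p4] -> general4 p1 p2 p3 p4.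
Proof.
move=> ha /= /and4P[/and4P[n12 n13 n14 _] /and3P[n23 n24 _] /andP[n34 _] _].
move=> /and5P[/eqP h1 /eqP h2 /eqP h3 /eqP h4 _].
by apply/and4P; split; apply: (smooth_conic_noncollinear ha).
Qed.

Lemma pencil_coefficients (al be u v : F) :
  (al != 0) || (be != 0) -> (u != 0) || (v != 0) -> al * u + be * v = 0 ->
  exists2 t, t != 0 & al = t * v /\ be = - (t * u).
Proof.
move=> ab0 uv0 /eqP; rewrite addr_eq0 => /eqP hab.
have [u0 | nu] := eqVneq u 0.
  move: uv0 hab; rewrite u0 mulr0 eqxx /= => v0 /esym/eqP.
  rewrite oppr_eq0 mulf_eq0 (negbTE v0) orbF => /eqP be0.
  move: ab0; rewrite be0 eqxx orbF => al0.
  by exists (al / v); rewrite ?divfK ?mulr0 ?oppr0 // mulf_neq0 ?invr_eq0.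
exists (- be / u); last first.
  split; last by rewrite divfK // opprK.
  by apply: (mulIf nu); rewrite hab mulrAC divfK // mulNr.
apply: contraTneq ab0 => /eqP; rewrite mulf_eq0 invr_eq0 (negbTE nu) orbF oppr_eq0 => /eqP be0.
move: hab; rewrite be0 mul0r oppr0 => /eqP.
by rewrite mulf_eq0 (negbTE nu) orbF => /eqP->; rewrite eqxx.
Qed.

Lemma conic_through5 a p1 p2 p3 p4 p5 : qdet a != 0 ->
  pairwise (fun p q => cross p q != vec0) [:: p1; p2; p3; p4; p5] ->
  all (fun p => qf a p == 0) [:: p1; p2; p3; p4; p5] ->
  exists2 t, t != 0 & a = qscale t (conic5 p1 p2 p3 p4 p5).
Proof.
move=> ha /= /and5P[/and5P[n12 n13 n14 n15 _] /and4P[n23 n24 n25 _] /and3P[n34 n35 _]].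
move=> /andP[n45 _] _.
move=> /and5P[/eqP h1 /eqP h2 /eqP h3 /eqP h4 /andP[h5 _]].
have g : general4 p1 p2 p3 p4.
  apply: (smooth_conic_general4 ha); first by rewrite /= n12 n13 n14 n23 n24 n34.
  by rewrite /= h1 h2 h3 h4 eqxx.
have [al [be def_a]] := pencil_through4 g h1 h2 h3 h4.
set u := pair_val (cross p1 p2) (cross p3 p4) p5.
set v := pair_val (cross p1 p4) (cross p2 p3) p5.
have uv0 : (u != 0) || (v != 0).
  apply: contraT; rewrite negb_or !negbK => /andP[/eqP u0 /eqP v0].
  have := pencil_base_points g u0 v0.
  by rewrite /= (negbTE n15) (negbTE n25) (negbTE n35) (negbTE n45).
have ab0 : (al != 0) || (be != 0).
  apply: contraR ha; rewrite negb_or !negbK def_a => /andP[/eqP-> /eqP->].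
  by rewrite /qdet /= !mul0r !add0r !(mulr0, mul0r, mul0rn, subr0, addr0).
have uv : al * u + be * v = 0.
  move: h5; rewrite def_a qf_qcomb !qf_line_pair !mulrnAr -mulrnDl mulrn2_eq0.
  by move/eqP.
have [t t0 [al_t be_t]] := pencil_coefficients ab0 uv0 uv.
by exists t; rewrite // def_a al_t be_t -mulrN qcomb_scale.
Qed.

End Conics.

(** * The ring Z[zeta_8] and its embedding into algC *)

(* [Cyc8 a b c d] stands for a + b z + c z^2 + d z^3 in Z[z]/(z^4 + 1) = Z[zeta_8]. *)
Record cyc8 := Cyc8 { cyc0 : Z; cyc1 : Z; cyc2 : Z; cyc3 : Z }.

Definition cyc8_tuple x := (cyc0 x, cyc1 x, cyc2 x, cyc3 x).
Definition tuple_cyc8 (t : Z * Z * Z * Z) := let: (a, b, c, d) := t in Cyc8 a b c d.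
Lemma cyc8_tupleK : cancel cyc8_tuple tuple_cyc8. Proof. by case. Qed.
HB.instance Definition _ := Countable.copy cyc8 (can_type cyc8_tupleK).

Section Cyc8Ring.
Local Open Scope Z_scope.

Definition cyc8_zero := Cyc8 0 0 0 0.
Definition cyc8_one := Cyc8 1 0 0 0.
Definition cyc8_add x y :=
  Cyc8 (cyc0 x + cyc0 y) (cyc1 x + cyc1 y) (cyc2 x + cyc2 y) (cyc3 x + cyc3 y).
Definition cyc8_opp x := Cyc8 (- cyc0 x) (- cyc1 x) (- cyc2 x) (- cyc3 x).
Definition cyc8_mul x y :=
  let: Cyc8 a0 a1 a2 a3 := x in let: Cyc8 b0 b1 b2 b3 := y in
  Cyc8 (a0 * b0 - a1 * b3 - a2 * b2 - a3 * b1)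
       (a0 * b1 + a1 * b0 - a2 * b3 - a3 * b2)
       (a0 * b2 + a1 * b1 + a2 * b0 - a3 * b3)
       (a0 * b3 + a1 * b2 + a2 * b1 + a3 * b0).

Local Ltac cyc8_ring :=
  repeat case=> ? ? ? ?; rewrite /cyc8_add /cyc8_opp /cyc8_mul /=; congr Cyc8; ring.

Fact cyc8_addA : associative cyc8_add. Proof. by cyc8_ring. Qed.
Fact cyc8_addC : commutative cyc8_add. Proof. by cyc8_ring. Qed.
Fact cyc8_add0 : left_id cyc8_zero cyc8_add. Proof. by cyc8_ring. Qed.
Fact cyc8_addN : left_inverse cyc8_zero cyc8_opp cyc8_add. Proof. by cyc8_ring. Qed.
Fact cyc8_mulA : associative cyc8_mul. Proof. by cyc8_ring. Qed.
Fact cyc8_mulC : commutative cyc8_mul. Proof. by cyc8_ring. Qed.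
Fact cyc8_mul1 : left_id cyc8_one cyc8_mul. Proof. by case=> *; congr Cyc8; ring. Qed.
Fact cyc8_mulDl : left_distributive cyc8_mul cyc8_add. Proof. by cyc8_ring. Qed.
Fact cyc8_one_neq0 : cyc8_one != cyc8_zero. Proof. by []. Qed.

End Cyc8Ring.

HB.instance Definition _ := GRing.isZmodule.Build cyc8 cyc8_addA cyc8_addC cyc8_add0 cyc8_addN.
HB.instance Definition _ :=
  GRing.Zmodule_isComNzRing.Build cyc8 cyc8_mulA cyc8_mulC cyc8_mul1 cyc8_mulDl cyc8_one_neq0.

Definition zeta8 : algC := 4.-root (-1).

Lemma zeta8_4 : zeta8 ^+ 4 = -1.
Proof. exact: rootCK. Qed.

Lemma zeta8_prim : 8.-primitive_root zeta8.
Proof.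
have z8 : zeta8 ^+ 8 = 1 by rewrite (exprM _ 4 2) zeta8_4 sqrrN expr1n.
have [m pm dvd_m8] := prim_order_exists (isT : (0 < 8)%N) z8.
have z4 : (zeta8 ^+ 4 == 1) = false.
  by rewrite zeta8_4 -subr_eq0 -opprD oppr_eq0 -mulr2n pnatr_eq0.
have := prim_order_dvd pm 4; rewrite z4.
have : m \in divisors 8 by rewrite -dvdn_divisors.
rewrite (_ : divisors 8 = [:: 1; 2; 4; 8]%N) // !inE.
by case/or4P=> /eqP m_def; rewrite m_def in pm *.
Qed.

Lemma zeta8_sqr : zeta8 ^+ 2 = 'i.
Proof.
have : (zeta8 ^+ 2 - 'i) * (zeta8 ^+ 2 + 'i) = 0.
  by rewrite -subr_sqr -exprM zeta8_4 sqrCi subrr.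
move/eqP; rewrite mulf_eq0 subr_eq0 addr_eq0 => /orP[/eqP // | /eqP z2].
(* Otherwise - 'i * zeta8 is a fourth root of -1 in the upper half plane with a larger
   real part than zeta8, against the choice made by [4.-root]. *)
have b_ge0 : 0 <= 'Im zeta8 := @Im_rootC_ge0 _ 4 _ isT.
have ab : 'Re zeta8 * 'Im zeta8 *+ 2 = -1.
  by move/(congr1 (@Im _)): z2; rewrite expr2 ImM raddfN /= Im_i mulrC -mulr2n.
have a_lt0 : 'Re zeta8 < 0.
  rewrite real_ltNge ?Creal_Re ?rpred0 //; apply/negP => a_ge0.
  have : 0 <= 'Re zeta8 * 'Im zeta8 *+ 2 by rewrite mulrn_wge0 ?mulr_ge0.
  by rewrite ab ler0N1.
have := @rootC_Re_max _ 4%N (-1) (- 'i * zeta8) isT.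
rewrite exprMn zeta8_4 (exprM _ 2 2) sqrrN sqrCi sqrrN expr1n mul1r.
rewrite mulNr raddfN /= ImMil oppr_ge0 (ltW a_lt0) raddfN /= ReMil opprK => /(_ erefl isT).
by move/le_lt_trans/(_ a_lt0); rewrite real_ltNge ?Creal_Im ?rpred0 // b_ge0.
Qed.

Definition zC (z : Z) : algC := (int_of_Z z)%:~R.

Lemma zCD x y : zC (x + y)%Z = zC x + zC y.
Proof. by rewrite /zC -intrD -(rmorphD int_of_Z). Qed.
Lemma zCN x : zC (- x)%Z = - zC x.
Proof. by rewrite /zC -mulrNz -(rmorphN int_of_Z). Qed.
Lemma zCB x y : zC (x - y)%Z = zC x - zC y.
Proof. by rewrite -zCN -zCD. Qed.
Lemma zCM x y : zC (x * y)%Z = zC x * zC y.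
Proof. by rewrite /zC -intrM -(rmorphM int_of_Z). Qed.

Definition cyc8C (x : cyc8) : algC :=
  zC (cyc0 x) + zC (cyc1 x) * zeta8 + zC (cyc2 x) * zeta8 ^+ 2 + zC (cyc3 x) * zeta8 ^+ 3.

Fact cyc8C_is_zmod_morphism : zmod_morphism cyc8C.
Proof. by move=> [? ? ? ?] [? ? ? ?]; rewrite /cyc8C /= !zCD !zCN; ring. Qed.

Fact cyc8C_is_monoid_morphism : monoid_morphism cyc8C.
Proof.
split; first by rewrite /cyc8C /= /zC !mul0r !addr0.
move=> [a0 a1 a2 a3] [b0 b1 b2 b3]; rewrite /cyc8C /= !zCB !zCD !zCM.
(* the two sides differ by a multiple of zeta8^4 + 1 *)
apply/eqP; rewrite -subr_eq0; apply/eqP.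
transitivity (- (zeta8 ^+ 4 + 1) * (zC a1 * zC b3 + zC a2 * zC b2 + zC a3 * zC b1
    + (zC a2 * zC b3 + zC a3 * zC b2) * zeta8 + zC a3 * zC b3 * zeta8 ^+ 2)); first ring.
by rewrite zeta8_4 addNr oppr0 mul0r.
Qed.

HB.instance Definition _ := GRing.isZmodMorphism.Build cyc8 algC cyc8C cyc8C_is_zmod_morphism.
HB.instance Definition _ :=
  GRing.isMonoidMorphism.Build cyc8 algC cyc8C cyc8C_is_monoid_morphism.

Lemma cyc8C_eq0 x : (cyc8C x == 0) = (x == 0).
Proof.
apply/eqP/eqP => [x0 | ->]; last exact: rmorph0.
(* 1, zeta8, zeta8^2, zeta8^3 are free over Q: the minimal polynomial of zeta8 is the
   cyclotomic polynomial of order 8, of degree 4. *)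
pose q := \poly_(i < 4) (int_of_Z (nth Z0 [:: cyc0 x; cyc1 x; cyc2 x; cyc3 x] i))%:~R : {poly rat}.
have q_zeta : (map_poly ratr q).[zeta8] = cyc8C x.
  rewrite (@horner_coef_wide _ 4) ?size_map_poly ?size_poly //.
  rewrite !big_ord_recl big_ord0 !coef_map !coef_poly /= !rmorph_int /cyc8C /zC.
  by rewrite expr0 expr1 mulr1 addr0; ring.
have [p [Dp monp] dvd_p] := minCpolyP zeta8.
have dvd_pq : p %| q by rewrite -dvd_p /root q_zeta x0.
have size_p : size p = 5%N.
  rewrite -(size_map_poly (ratr : rat -> algC)) -Dp (minCpoly_cyclotomic zeta8_prim).
  by rewrite size_cyclotomic.
have q0 : q = 0.
  apply: contraTeq dvd_pq => /dvdp_leq le_pq; apply/negP => /le_pq.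
  by rewrite size_p => /leq_trans/(_ (size_poly _ _)).
have coef0 i : (i < 4)%N -> nth Z0 [:: cyc0 x; cyc1 x; cyc2 x; cyc3 x] i = Z0.
  move=> lt_i4; have := coef_poly 4 (fun i => (int_of_Z
    (nth Z0 [:: cyc0 x; cyc1 x; cyc2 x; cyc3 x] i))%:~R : rat) i.
  rewrite lt_i4 -/q q0 coef0 => /esym/eqP; rewrite intr_eq0 => /eqP.
  by move/(congr1 Z_of_int); rewrite int_of_ZK.
case: x {x0 q q_zeta q0 dvd_pq} coef0 => a b c d /= c0.
by move: (c0 0%N isT) (c0 1%N isT) (c0 2%N isT) (c0 3%N isT) => /= -> -> -> ->.
Qed.

(** * Symmetric matrices as quadratic forms *)

Definition row3 (p : vec3 algC) : 'rV[algC]_3 := pt (vx p) (vy p) (vz p).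

Definition mx_of_quad (a : quad algC) : 'M[algC]_3 :=
  \matrix_(i, j) nth 0 (nth [::]
    [:: [:: q00 a; q01 a; q02 a]; [:: q01 a; q11 a; q12 a]; [:: q02 a; q12 a; q22 a]] i) j.

Local Notation i0 := (ord0 : 'I_3).
Local Notation i1 := (lift ord0 ord0 : 'I_3).
Local Notation i2 := (lift ord0 (lift ord0 ord0) : 'I_3).

Definition quad_of_mx (A : 'M[algC]_3) : quad algC :=
  Quad (A i0 i0) (A i1 i1) (A i2 i2) (A i0 i1) (A i0 i2) (A i1 i2).

Lemma ord3P (i : 'I_3) : [\/ i = i0, i = i1 | i = i2].
Proof.
by case: i => [[|[|[|//]]] lt_i3]; [apply: Or31 | apply: Or32 | apply: Or33]; apply: val_inj.
Qed.

Lemma sym_mxE (A : 'M[algC]_3) i j : A^T = A -> A j i = A i j.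
Proof. by move=> symA; rewrite -{1}symA mxE. Qed.

Lemma mx_of_quad_sym a : (mx_of_quad a)^T = mx_of_quad a.
Proof. by apply/matrixP => i j; rewrite !mxE; case: (ord3P i) => ->; case: (ord3P j) => ->. Qed.

Lemma mx_of_quadK a : quad_of_mx (mx_of_quad a) = a.
Proof. by case: a => *; rewrite /quad_of_mx !mxE. Qed.

Lemma sym_mx_quad_inj A B : A^T = A -> B^T = B -> quad_of_mx A = quad_of_mx B -> A = B.
Proof.
move=> symA symB [] eq00 eq11 eq22 eq01 eq02 eq12; apply/matrixP => i j.
by case: (ord3P i) => ->; case: (ord3P j) => ->;
  rewrite // (sym_mxE _ _ symA) (sym_mxE _ _ symB).
Qed.

Lemma mx11_eq0 (M : 'M[algC]_1) : (M == 0) = (M 0 0 == 0).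
Proof.
by apply/eqP/eqP => [-> | M00]; [rewrite mxE | apply/matrixP => i j; rewrite !ord1 M00 mxE].
Qed.

Lemma on_conic_quad A p : A^T = A -> on_conic A (row3 p) = (qf (quad_of_mx A) p == 0).
Proof.
move=> symA; rewrite /on_conic mx11_eq0.
rewrite !mxE !big_ord_recl big_ord0 !mxE !big_ord_recl !big_ord0 !mxE /=.
rewrite /qf /= (sym_mxE i0 i1 symA) (sym_mxE i0 i2 symA) (sym_mxE i1 i2 symA).
by congr (_ == _); ring.
Qed.

Lemma det_quad A : A^T = A -> \det A = qdet (quad_of_mx A).
Proof.
move=> symA; pose a m n := A (inord m) (inord n).
have Aa i j : A i j = a i j by rewrite /a !inord_val.
have a_sym m n : (m < 3)%N -> (n < 3)%N -> a n m = a m n.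
  by move=> lt_m lt_n; rewrite /a (sym_mxE (inord m) (inord n) symA).
rewrite (expand_det_row _ i0) !big_ord_recl big_ord0 /cofactor.
rewrite !(expand_det_row _ ord0) !big_ord_recl !big_ord0 /cofactor !det_mx11 !mxE /qdet /=.
rewrite !Aa /= (a_sym 0 1) // (a_sym 0 2) // (a_sym 1 2) //.
ring.
Qed.

Lemma quad_of_mxZ k A : quad_of_mx (k *: A) = qscale k (quad_of_mx A).
Proof. by rewrite /quad_of_mx !mxE. Qed.

Lemma same_conic_quad A b t : A^T = A -> t != 0 -> quad_of_mx A = qscale t b ->
  same_conic A (mx_of_quad b).
Proof.
move=> symA t0 Ab; exists t^-1; first by rewrite invr_eq0.
apply: sym_mx_quad_inj; rewrite ?mx_of_quad_sym ?linearZ /= ?symA //.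
rewrite mx_of_quadK quad_of_mxZ Ab /qscale /=.
by case: b {Ab} => * /=; congr Quad; rewrite mulrA mulVf ?mul1r.
Qed.

Lemma on_conicZ (A : 'M[algC]_3) k p : k != 0 -> on_conic (k *: A) p = on_conic A p.
Proof. by move=> k0; rewrite /on_conic -scalemxAr -scalemxAl scalemx_eq0 (negbTE k0). Qed.

(** * The 28 points and the enumeration of the conics *)

Definition zeta_c : cyc8 := Cyc8 0 1 0 0.
Definition imag_c : cyc8 := Cyc8 0 0 1 0.
Definition U4c : seq cyc8 := [:: 1; -1; imag_c; - imag_c].
Definition R4c : seq cyc8 := [seq zeta_c * u | u <- U4c].
Definition P16c : seq (vec3 cyc8) := [seq Vec3 a b 1 | a <- U4c, b <- U4c].
Definition P12c : seq (vec3 cyc8) :=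
  [seq Vec3 0 a 1 | a <- R4c] ++ [seq Vec3 a 0 1 | a <- R4c] ++ [seq Vec3 a 1 0 | a <- R4c].
Definition P28c : seq (vec3 cyc8) := P16c ++ P12c.
Definition pnt i : vec3 cyc8 := nth vec0 P28c i.

Fixpoint ksubseqs T k (s : seq T) : seq (seq T) :=
  if k is k'.+1 then
    if s is x :: s' then [seq x :: r | r <- ksubseqs k' s'] ++ ksubseqs k s' else [::]
  else [:: [::]].

Definition line_rows : seq (seq (seq cyc8)) :=
  [seq [seq [seq det3 (pnt a) (pnt b) p | p <- P28c] | b <- iota 0 28] | a <- iota 0 28].
Definition line_row (t : seq (seq (seq cyc8))) a b := nth [::] (nth [::] t a) b.
Definition mul_rows (r s : seq cyc8) := [seq x.1 * x.2 | x <- zip r s].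

Definition zeros (c : quad cyc8) := [seq i <- iota 0 28 | qf c (pnt i) == 0].

(* Each conic through at least six of the points is produced once, from its first four
   points [Q] and its fifth point [i5].  The table [t] of line values is an argument so
   that it is computed only once, and [keep] uses [if] rather than [&&] so that
   [vm_compute] does not evaluate [qdet] for every candidate. *)
Definition fifth_point_conics (t : seq (seq (seq cyc8))) (Q : seq nat) : seq (quad cyc8) :=
  if Q is [:: i1; i2; i3; i4] then
    if general4 (pnt i1) (pnt i2) (pnt i3) (pnt i4) then
      let us := mul_rows (line_row t i1 i2) (line_row t i3 i4) in
      let vs := mul_rows (line_row t i1 i4) (line_row t i2 i3) in
      let keep i5 :=
        let u5 := nth 0 us i5 in let v5 := nth 0 vs i5 in
        let Z := [seq i <- iota 0 28 | v5 * nth 0 us i - u5 * nth 0 vs i == 0] in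
        if (take 5 Z == rcons Q i5) && (5 < size Z)%N
        then qdet (conic5 (pnt i1) (pnt i2) (pnt i3) (pnt i4) (pnt i5)) != 0 else false in
      [seq conic5 (pnt i1) (pnt i2) (pnt i3) (pnt i4) (pnt i5)
        | i5 <- iota i4.+1 (27 - i4) & keep i5]
    else [::]
  else [::].

Definition conics : seq (quad cyc8) :=
  let t := line_rows in flatten [seq fifth_point_conics t Q | Q <- ksubseqs 4 (iota 0 28)].

Definition census (cs : seq (quad cyc8)) : bool :=
  let zs := map zeros cs in
  [&& size cs == 2736, all (fun c => qdet c != 0) cs, all (fun z => 6 <= size z <= 8)%N zs,
      count (fun z => size z == 6)%N zs == 2616, count (fun z => size z == 7) zs == 96,
      count (fun z => size z == 8) zs == 24, uniq zs,
      all (fun i => count (fun z => i \in z) zs == 546) (iota 0 16)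
    & all (fun i => count (fun z => i \in z) zs == 652) (iota 16 12)].

Lemma P28c_distinct : pairwise (fun p q => cross p q != vec0) P28c.
Proof. by vm_compute. Qed.

Lemma census_conics : census conics.
Proof. by vm_compute. Qed.

(** * Correctness of the enumeration *)

Lemma two_neq0C : 2%:R != 0 :> algC. Proof. by rewrite pnatr_eq0. Qed.

Lemma cyc8_mulrn2_eq0 (x : cyc8) : (x *+ 2 == 0) = (x == 0).
Proof. by rewrite -(cyc8C_eq0 (x *+ 2)) rmorphMn (mulrn2_eq0 two_neq0C) cyc8C_eq0. Qed.

Lemma cyc8C_zeta : cyc8C zeta_c = zeta8.
Proof. by rewrite /cyc8C /= /zC /= mulr1z mul1r !mul0r addr0 add0r !addr0. Qed.

Lemma cyc8C_imag : cyc8C imag_c = 'i.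
Proof. by rewrite /cyc8C /= /zC /= mulr1z mul1r !mul0r add0r addr0 add0r zeta8_sqr. Qed.

Definition pntC i : vec3 algC := map_vec3 cyc8C (pnt i).

Lemma P28E : P28 = [seq row3 (pntC i) | i <- iota 0 28].
Proof.
have U4E : U4 = map cyc8C U4c.
  by rewrite /U4 /U4c /= !rmorphN /= rmorph1 cyc8C_imag.
have R4E : R4 = map cyc8C R4c.
  by rewrite /R4 /R4c U4E -!map_comp; apply: eq_map => u; rewrite /comp rmorphM /= cyc8C_zeta.
transitivity [seq row3 (map_vec3 cyc8C p) | p <- P28c]; last first.
  by rewrite -{1}(mkseq_nth vec0 P28c) /mkseq -map_comp.
rewrite /P28 /P28c map_cat /P16 /P16c /P12 /P12c !map_cat U4E R4E /=.
by rewrite /row3 /= !rmorph0 !rmorph1.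
Qed.

Lemma nth_P28 i : (i < 28)%N -> nth 0 P28 i = row3 (pntC i).
Proof. by move=> lt_i28; rewrite P28E (nth_map 0%N) ?size_iota ?nth_iota. Qed.

Lemma size_P16 : size P16 = 16%N. Proof. by []. Qed.
Lemma mem_P16 p : p \in P16 -> exists2 i, (i < 16)%N & p = nth 0 P28 i.
Proof.
case/(nthP 0) => i lt_i <-; have lt_i16 : (i < 16)%N := lt_i.
by exists i; rewrite // (nth_cat 0 P16 P12) size_P16 lt_i16.
Qed.
Lemma mem_P12 p : p \in P12 -> exists2 i, (16 <= i < 28)%N & p = nth 0 P28 i.
Proof.
case/(nthP 0) => i lt_i <-; have lt_i12 : (i < 12)%N := lt_i.
exists (16 + i)%N; first by rewrite leq_addr -[28%N]/(16 + 12)%N ltn_add2l.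
by rewrite (nth_cat 0 P16 P12) size_P16 ltnNge leq_addr addKn.
Qed.

Definition zerosC (a : quad algC) := [seq i <- iota 0 28 | qf a (pntC i) == 0].

Lemma zeros_map c : zeros c = zerosC (map_quad cyc8C c).
Proof. by apply: eq_filter => i; rewrite /pntC qf_map cyc8C_eq0. Qed.

Lemma zerosC_qscale t a : t != 0 -> zerosC (qscale t a) = zerosC a.
Proof. by move=> t0; apply: eq_filter => i; rewrite qf_qscale mulf_eq0 (negbTE t0). Qed.

Lemma npts_sym A : A^T = A -> npts A = size (zerosC (quad_of_mx A)).
Proof.
move=> symA; rewrite /npts P28E count_map size_filter.
by apply: eq_count => i; rewrite /= on_conic_quad.
Qed.

Definition conicC (c : quad cyc8) : 'M[algC]_3 := mx_of_quad (map_quad cyc8C c).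

Lemma npts_conicC c : npts (conicC c) = size (zeros c).
Proof. by rewrite npts_sym ?mx_of_quad_sym // mx_of_quadK zeros_map. Qed.

Lemma on_conicC c i : (i < 28)%N -> on_conic (conicC c) (nth 0 P28 i) = (qf c (pnt i) == 0).
Proof.
move=> lt_i28; rewrite nth_P28 // on_conic_quad ?mx_of_quad_sym // mx_of_quadK.
by rewrite qf_map cyc8C_eq0.
Qed.

Lemma conicC_smooth c : qdet c != 0 -> smooth_conic (conicC c).
Proof.
by split; rewrite ?mx_of_quad_sym // det_quad ?mx_of_quad_sym // mx_of_quadK qdet_map cyc8C_eq0.
Qed.

Lemma same_conicC_zeros c d : same_conic (conicC c) (conicC d) -> zeros c = zeros d.
Proof.
case=> k k0 dc; apply: eq_in_filter => i; rewrite mem_iota => /andP[_ lt_i28].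
by rewrite -!on_conicC // dc on_conicZ.
Qed.

Lemma mem_ksubseqs (T : eqType) k (s r : seq T) : subseq r s -> size r = k -> r \in ksubseqs k s.
Proof.
elim: s k r => [|x s IHs] [|k] r /=.
- by move/eqP=> -> _; rewrite inE.
- by move/eqP=> ->.
- by case: r => // _ _; rewrite inE.
case: r => [|y r] //= sub_r [size_r]; rewrite mem_cat.
case: eqP sub_r => [-> sub_r | _ sub_yr]; first by rewrite (map_f (cons x)) // IHs.
by rewrite IHs ?orbT //= size_r.
Qed.

Lemma size_P28c : size P28c = 28%N. Proof. by []. Qed.

Lemma line_rowE a b : (a < 28)%N -> (b < 28)%N ->
  line_row line_rows a b = [seq det3 (pnt a) (pnt b) p | p <- P28c].
Proof.
by move=> lt_a lt_b; rewrite /line_row !(nth_map 0%N) ?size_iota // !nth_iota.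
Qed.

Lemma mul_rows_map T (f g : T -> cyc8) s : mul_rows (map f s) (map g s) = [seq f x * g x | x <- s].
Proof. by rewrite /mul_rows; elim: s => //= x s ->. Qed.

Lemma mem_fifth_point_conics i1 i2 i3 i4 i5 :
  all (fun i => i < 28)%N [:: i1; i2; i3; i4; i5] -> (i4 < i5)%N ->
  general4 (pnt i1) (pnt i2) (pnt i3) (pnt i4) ->
  let c := conic5 (pnt i1) (pnt i2) (pnt i3) (pnt i4) (pnt i5) in
  take 5 (zeros c) = [:: i1; i2; i3; i4; i5] -> (5 < size (zeros c))%N -> qdet c != 0 ->
  c \in fifth_point_conics line_rows [:: i1; i2; i3; i4].
Proof.
case/and5P=> lt1 lt2 lt3 lt4 /andP[lt5 _] lt45 g c take5 size5 qc.
rewrite /fifth_point_conics g !line_rowE // !mul_rows_map.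
apply/mapP; exists i5 => //; rewrite mem_filter mem_iota lt45 addSn subnKC //.
set Z := filter _ (iota 0 28); have -> : Z = zeros c.
  apply: eq_in_filter => i; rewrite mem_iota => /andP[_ lt_i28].
  by rewrite !(nth_map vec0) ?size_P28c // qf_conic5 cyc8_mulrn2_eq0.
by rewrite take5 eqxx size5 qc lt5.
Qed.

Lemma mem_conics Q c : Q \in ksubseqs 4 (iota 0 28) ->
  c \in fifth_point_conics line_rows Q -> c \in conics.
Proof.
by move=> Q_in c_in; apply/flattenP; exists (fifth_point_conics line_rows Q); rewrite ?map_f.
Qed.

Lemma map_vec3_cyc8C_eq0 v : (map_vec3 cyc8C v == vec0) = (v == vec0).
Proof.
case: v => x y z; apply/eqP/eqP => [[] | [-> -> ->]]; last by rewrite /map_vec3 /= rmorph0.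
by move=> /eqP + /eqP + /eqP; rewrite !cyc8C_eq0 => /eqP-> /eqP-> /eqP->.
Qed.

Lemma pntC_distinct : pairwise (fun p q => cross p q != vec0) [seq pntC i | i <- iota 0 28].
Proof.
have := P28c_distinct; rewrite -(mkseq_nth vec0 P28c) /mkseq pairwise_map => dist.
rewrite pairwise_map; apply: sub_pairwise dist => i j.
by rewrite /= -map_cross map_vec3_cyc8C_eq0.
Qed.

Lemma zerosC_prefix a n : let s := map pntC (take n (zerosC a)) in
  pairwise (fun p q => cross p q != vec0) s /\ all (fun p => qf a p == 0) s.
Proof.
split; last by rewrite all_map; apply/allP => i /mem_take; rewrite mem_filter => /andP[].
apply: subseq_pairwise pntC_distinct; apply: map_subseq.
exact: subseq_trans (take_subseq _ _) (filter_subseq _ _).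
Qed.

Lemma conicC_complete A : smooth_conic A -> (6 <= npts A)%N ->
  exists2 c, c \in conics & same_conic A (conicC c).
Proof.
case=> symA; rewrite det_quad // npts_sym //; set a := quad_of_mx A => qa n6.
have [i1 [i2 [i3 [i4 [i5 [T defT]]]]]] : exists i1 i2 i3 i4 i5 T,
    zerosC a = [:: i1, i2, i3, i4, i5 & T].
  by move: n6; case: (zerosC a) => [|? [|? [|? [|? [|? ?]]]]] //; do 6 eexists.
have := zerosC_prefix a 5; rewrite defT [take _ _]/= take0 => -[dist5 on5].
have [t t0 def_a] := conic_through5 two_neq0C qa dist5 on5.
rewrite /pntC -map_conic5 in def_a.
set c := conic5 (pnt i1) (pnt i2) (pnt i3) (pnt i4) (pnt i5) in def_a.
exists c; last exact: same_conic_quad symA t0 def_a.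
have zc : zeros c = zerosC a by rewrite def_a zerosC_qscale // zeros_map.
have sub_T : subseq [:: i1, i2, i3, i4, i5 & T] (iota 0 28) by rewrite -defT filter_subseq.
apply: (@mem_conics [:: i1; i2; i3; i4]).
  exact: mem_ksubseqs (subseq_trans (take_subseq _ 4) sub_T) erefl.
apply: mem_fifth_point_conics; rewrite -/c ?zc ?defT.
- have : all (fun i => i < 28)%N (zerosC a).
    by apply/allP => i; rewrite mem_filter mem_iota => /and3P[].
  by rewrite defT /= => /and5P[-> -> -> -> /andP[->]].
- by case/and5P: (subseq_sorted ltn_trans sub_T (iota_ltn_sorted 0 28)).
- have on4 : all (fun p => qf a p == 0) [:: pntC i1; pntC i2; pntC i3; pntC i4].
    by case/and5P: on5 => /= -> -> -> ->.
  move: (smooth_conic_general4 two_neq0C qa (subseq_pairwise (take_subseq _ 4) dist5) on4).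
  by rewrite /general4 /pntC !det3_map !cyc8C_eq0.
- by rewrite /= take0.
- by rewrite -defT.
by move: qa; rewrite def_a qdet_qscale qdet_map mulf_eq0 negb_or cyc8C_eq0 => /andP[].
Qed.

Lemma count_npts_conicC (P : pred nat) cs :
  count (fun A => P (npts A)) (map conicC cs) = count (fun z => P (size z)) (map zeros cs).
Proof. by rewrite !count_map; apply: eq_count => c /=; rewrite npts_conicC. Qed.

Lemma count_on_conicC i cs : (i < 28)%N ->
  count (fun A => on_conic A (nth 0 P28 i)) (map conicC cs) =
  count (fun z => i \in z) (map zeros cs).
Proof.
move=> lt_i28; rewrite !count_map; apply: eq_count => c /=.
by rewrite on_conicC // /zeros mem_filter mem_iota /= lt_i28 andbT.
Qed.

Theorem mainTheorem1 :
  exists s : seq 'M[algC]_3,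
    [/\ size s = 2736%N,
        (forall A, A \in s -> smooth_conic A /\ (6 <= npts A)%N) /\
        (forall i j, (i < size s)%N -> (j < size s)%N ->
            same_conic (nth 0 s i) (nth 0 s j) -> i = j),
        (forall A, smooth_conic A -> (6 <= npts A)%N ->
            exists2 B, B \in s & same_conic A B),
        [/\ count (fun A => npts A == 6%N) s = 2616%N,
            count (fun A => npts A == 7%N) s = 96%N,
            count (fun A => npts A == 8%N) s = 24%N &
            all (fun A => npts A <= 8)%N s] &
        ((forall p, p \in P16 -> count (fun A => on_conic A p) s = 546%N) /\
         (forall p, p \in P12 -> count (fun A => on_conic A p) s = 652%N))].
Proof.
have := conicC_complete; have := census_conics; move: conics => cs.
case/and5P=> size_cs smooth_cs npts_cs c6 /and5P[c7 c8 uniq_zs on16 on12] complete.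
have npts_cs' c : c \in cs -> (6 <= npts (conicC c) <= 8)%N.
  by move=> c_in; rewrite npts_conicC (allP npts_cs _ (map_f zeros c_in)).
exists (map conicC cs); split.
- by rewrite size_map (eqP size_cs).
- split=> [_ /mapP[c c_in ->] | i j].
    split; first exact: conicC_smooth (allP smooth_cs c c_in).
    by case/andP: (npts_cs' c c_in).
  rewrite size_map => lt_i lt_j; rewrite !(nth_map quad0) // => /same_conicC_zeros.
  rewrite -!(nth_map quad0 [::] zeros) // => /eqP.
  by rewrite nth_uniq ?size_map // => /eqP.
- move=> A sA n6; have [c c_in sc] := complete A sA n6.
  by exists (conicC c); rewrite ?map_f.
- rewrite (count_npts_conicC (fun n => n == 6%N)) (count_npts_conicC (fun n => n == 7%N)).
  rewrite (count_npts_conicC (fun n => n == 8%N)) (eqP c6) (eqP c7) (eqP c8); split=> //.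
  by apply/allP => _ /mapP[c c_in ->]; case/andP: (npts_cs' c c_in).
split=> p.
  case/mem_P16 => i lt_i16 ->; rewrite count_on_conicC ?(ltn_trans lt_i16) //.
  by apply/eqP/(allP on16); rewrite mem_iota.
case/mem_P12 => i /andP[ge_i16 lt_i28] ->; rewrite count_on_conicC //.
by apply/eqP/(allP on12); rewrite mem_iota ge_i16.
Qed.
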